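(* There exists a countable two-dimensional subshift of finite type $X$ that has infinitely many periodic points and whose subpattern poset $(X/\!\approx, \succcurlyeq)$ contains an infinite antichain.
   Context: A two-dimensional SFT is the set of configurations in $S^{\mathbb{Z}^2}$ ($S$ finite) avoiding a finite set of forbidden finite patterns. For configurations $x,y$, $x \succcurlyeq y$ means every finite pattern occurring in $y$ also occurs in $x$; $x \approx y$ means $x \succcurlyeq y$ and $y \succcurlyeq x$. The subpattern poset of $X$ is $(X/\!\approx, \succcurlyeq)$. An antichain is a set of pairwise incomparable elements. *)

From Stdlib Require Import ZArith List.
From mathcomp Require Import all_boot.
Open Scope Z_scope.

Definition config (S : Type) := Z -> Z -> S.

Definition pattern (S : Type) := list ((Z * Z) * S).

Definition occurs {S : Type} (p : pattern S) (x : config S) : Prop :=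
  exists v1 v2 : Z, forall e, List.In e p ->
    x (fst (fst e) + v1) (snd (fst e) + v2) = snd e.

Definition in_SFT {S : Type} (F : list (pattern S)) (x : config S) : Prop :=
  forall p, List.In p F -> ~ occurs p x.

(* x ≽ y : every finite pattern occurring in y occurs in x. *)
Definition subpat {S : Type} (x y : config S) : Prop :=
  forall p : pattern S, occurs p y -> occurs p x.

Definition config_eq {S : Type} (x y : config S) : Prop :=
  forall i j, x i j = y i j.

(* Periodic point: finite orbit under Z^2 shifts, i.e. nonzero periods in
   both coordinate directions. *)
Definition periodic {S : Type} (x : config S) : Prop :=
  exists p q : Z, p <> 0 /\ q <> 0 /\
    forall i j, x (i + p) j = x i j /\ x i (j + q) = x i j.

Definition countable_set {S : Type} (X : config S -> Prop) : Prop :=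
  exists f : nat -> config S, forall x, X x -> exists n, config_eq (f n) x.

From Stdlib Require Import ZArith List Lia Classical ClassicalEpsilon Wf_nat.
From mathcomp Require Import all_boot ssrZ.
From HB Require Import structures.
Local Open Scope Z_scope.

(* The SFT X = in_SFT grid_rules draws "square grids with diagonals": a
   configuration consists of horizontal lines (H), vertical lines (V), their
   crossings (C), diagonal lines of slope 1 (D) and the regions above (A) and
   below (B) the diagonal, all enforced by rules on neighbouring pairs along
   the directions (1,0), (0,1) and (1,1).

   In a valid configuration the horizontal, vertical and
   diagonal lines form three index sets in Z.  Each of them is empty, a single
   index, or an arithmetic progression (a coset of a subgroup of Z), hence is
   described by a finite code.  These codes and the symbol at the origin
   determine the configuration ([valid_rigid]), which yields an enumeration.

   For every m > 0 the square grid of mesh m,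
   [grid m], lies in X and is periodic.  The side of a cell of mesh M (a
   horizontal segment between two consecutive crossings) occurs in [grid M]
   but in no other [grid N]; so the grids form an infinite antichain and are,
   in particular, pairwise distinct. *)

Lemma In_of_mem (T : eqType) (a : T) (s : seq T) : a \in s -> List.In a s.
Proof. by elim: s => //= b s IH; rewrite in_cons => /orP [/eqP ->|/IH]; [left|right]. Qed.

Definition pair_pat {S : Type} (d : Z * Z) (ab : S * S) : pattern S :=
  ((0, 0), ab.1) :: (d, ab.2) :: nil.

Definition forbid_pairs {S : finType} (d : Z * Z) (ok : S -> S -> bool) : list (pattern S) :=
  List.map (pair_pat d)
    (List.filter (fun ab => ~~ ok ab.1 ab.2) (list_prod (enum S) (enum S))).

Lemma occurs_pair_pat {S : Type} (x : config S) d ab :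
  occurs (pair_pat d ab) x <->
  exists i j, x i j = ab.1 /\ x (i + d.1) (j + d.2) = ab.2.
Proof.
  split.
  - move=> [i [j Hocc]]; exists i, j.
    have := Hocc _ (or_introl erefl); have := Hocc _ (or_intror (or_introl erefl)).
    by rewrite /= (Z.add_comm i) (Z.add_comm j) => -> ->.
  - move=> [i [j [Ha Hb]]]; exists i, j => e [<-|[<-|[]]] /=.
    + by [].
    + by rewrite (Z.add_comm d.1) (Z.add_comm d.2).
Qed.

Lemma in_SFT_forbid_pairs (S : finType) d (ok : S -> S -> bool) (x : config S) :
  in_SFT (forbid_pairs d ok) x <-> forall i j, ok (x i j) (x (i + d.1) (j + d.2)).
Proof.
  split.
  - move=> HX i j; apply/negPn/negP => Hbad.
    apply: (HX (pair_pat d (x i j, x (i + d.1) (j + d.2)))).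
    + apply/in_map_iff; eexists; split; first reflexivity.
      apply/filter_In; split; last by [].
      by apply/in_prod; apply: In_of_mem; rewrite mem_enum.
    + by apply/occurs_pair_pat; exists i, j.
  - move=> Hok p /in_map_iff [ab [<- /filter_In [_ Hbad]]] /occurs_pair_pat [i [j [Ha Hb]]].
    by move: (Hok i j); rewrite Ha Hb (negbTE Hbad).
Qed.

Lemma in_SFT_app {S : Type} (F G : list (pattern S)) (x : config S) :
  in_SFT (F ++ G) x <-> in_SFT F x /\ in_SFT G x.
Proof.
  split.
  - by move=> H; split=> p Hp; apply: H; apply/in_app_iff; [left|right].
  - by move=> [HF HG] p /in_app_iff [Hp|Hp]; [apply: HF|apply: HG].
Qed.

(* The alphabet: crossing, horizontal line, vertical line, diagonal, and the
   regions above and below the diagonal inside a cell. *)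
Inductive sym := sC | sH | sV | sD | sA | sB.

Definition sym_to_ord (s : sym) : 'I_6 :=
  inord (match s with sC => 0 | sH => 1 | sV => 2 | sD => 3 | sA => 4 | sB => 5 end)%N.
Definition ord_to_sym (n : 'I_6) : sym :=
  match val n with 0%N => sC | 1%N => sH | 2%N => sV | 3%N => sD | 4%N => sA | _ => sB end.
Lemma sym_to_ordK : cancel sym_to_ord ord_to_sym.
Proof. by case; rewrite /ord_to_sym /= inordK. Qed.
HB.instance Definition _ := Finite.copy sym (can_type sym_to_ordK).

Definition on_hline (a : sym) : bool := if a is (sC | sH) then true else false.
Definition on_vline (a : sym) : bool := if a is (sC | sV) then true else false.
Definition on_dline (a : sym) : bool := if a is (sC | sD) then true else false.

(* Allowed horizontal neighbours ([b] right of [a]), vertical neighbours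
   ([b] above [a]) and diagonal neighbours ([b] at offset (1,1) from [a]). *)
Definition hok (a b : sym) : bool :=
  match a with
  | sC | sH => on_hline b
  | sV | sA => if b is (sA | sD) then true else false
  | sD | sB => if b is (sB | sV) then true else false
  end.
Definition vok (a b : sym) : bool :=
  match a with
  | sC | sV => on_vline b
  | sH | sB => if b is (sB | sD) then true else false
  | sD | sA => if b is (sA | sH) then true else false
  end.
Definition dok (a b : sym) : bool := on_dline a == on_dline b.

Definition grid_rules : list (pattern sym) :=
  forbid_pairs (1, 0) hok ++ forbid_pairs (0, 1) vok ++ forbid_pairs (1, 1) dok.

Definition valid (x : config sym) : Prop := forall i j,
  [/\ hok (x i j) (x (i + 1) j), vok (x i j) (x i (j + 1))
    & dok (x i j) (x (i + 1) (j + 1))].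

Lemma in_grid_SFT x : in_SFT grid_rules x <-> valid x.
Proof.
  rewrite /grid_rules !in_SFT_app !in_SFT_forbid_pairs /=.
  split.
  - move=> [Hh [Hv Hd]] i j.
    by split; [move: (Hh i j)|move: (Hv i j)|exact: Hd]; rewrite Z.add_0_r.
  - by move=> Hx; split; [|split] => i j; rewrite ?Z.add_0_r; case: (Hx i j).
Qed.

Lemma Z_shift_invariant (P : Z -> bool) :
  (forall i, P (i + 1) = P i) -> forall i, P i = P 0.
Proof.
  by move=> HP; apply: Z.bi_induction => // i; rewrite -Z.add_1_r HP.
Qed.

Lemma hok_hline a b : hok a b -> on_hline b = on_hline a. Proof. by case: a; case: b. Qed.
Lemma vok_vline a b : vok a b -> on_vline b = on_vline a. Proof. by case: a; case: b. Qed.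

(* The index sets of horizontal lines, vertical lines and diagonals of [x]
   (the diagonal through (i, j) has index [i - j]). *)
Definition rows (x : config sym) (j : Z) : bool := on_hline (x 0 j).
Definition cols (x : config sym) (i : Z) : bool := on_vline (x i 0).
Definition diags (x : config sym) (c : Z) : bool := on_dline (x c 0).

(* In a valid configuration every line runs through the whole plane. *)
Section Lines.
Variable x : config sym.
Hypothesis Hx : valid x.

Lemma hline_row i j : on_hline (x i j) = rows x j.
Proof.
  apply: (Z_shift_invariant (fun i => on_hline (x i j))) => k.
  by apply: hok_hline; case: (Hx k j).
Qed.

Lemma vline_col i j : on_vline (x i j) = cols x i.
Proof.
  apply: (Z_shift_invariant (fun j => on_vline (x i j))) => k.
  by apply: vok_vline; case: (Hx i k).
Qed.

Lemma dline_diag i j : on_dline (x i j) = diags x (i - j).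
Proof.
  have Hstep t :
      on_dline (x (i - j + (t + 1)) (t + 1)) = on_dline (x (i - j + t) t).
  { by rewrite Z.add_assoc; case: (Hx (i - j + t) t) => _ _ /eqP. }
  by have := Z_shift_invariant _ Hstep j; rewrite Z.sub_add Z.add_0_r.
Qed.

End Lines.

(* The kind of a symbol: the lines it lies on.  It determines the symbol up
   to the A/B distinction, which any neighbour resolves. *)
Definition kind (a : sym) : bool * bool * bool := (on_hline a, on_vline a, on_dline a).

Lemma kind_hinj a a' b : kind a = kind a' ->
  (hok a b -> hok a' b -> a = a') /\ (hok b a -> hok b a' -> a = a').
Proof. by case: a; case: a'; case: b. Qed.

Lemma kind_vinj a a' b : kind a = kind a' ->
  (vok a b -> vok a' b -> a = a') /\ (vok b a -> vok b a' -> a = a').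
Proof. by case: a; case: a'; case: b. Qed.

Lemma kind_of_lines x : valid x -> forall i j,
  kind (x i j) = (rows x j, cols x i, diags x (i - j)).
Proof. by move=> Hx i j; rewrite /kind hline_row // vline_col // dline_diag. Qed.

Lemma valid_rigid x y : valid x -> valid y ->
  (forall j, rows x j = rows y j) -> (forall i, cols x i = cols y i) ->
  (forall c, diags x c = diags y c) ->
  x 0 0 = y 0 0 -> config_eq x y.
Proof.
  move=> Hx Hy Hh Hv Hd H00.
  have Hk i j : kind (x i j) = kind (y i j) by rewrite !kind_of_lines // Hh Hv Hd.
  have Hcol j : x 0 j = y 0 j.
  { move: j; apply: Z.bi_induction => [|j]; first exact: H00.
    have [Hup _] := kind_vinj (x 0 j) (y 0 j) (x 0 (j + 1)) (Hk _ _).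
    have [_ Hdown] := kind_vinj (x 0 (j + 1)) (y 0 (j + 1)) (x 0 j) (Hk _ _).
    rewrite -Z.add_1_r; split=> E.
    - by apply: Hdown; [case: (Hx 0 j)|rewrite E; case: (Hy 0 j)].
    - by apply: Hup; [case: (Hx 0 j)|rewrite E; case: (Hy 0 j)]. }
  move=> i j; move: i; apply: Z.bi_induction => [|i]; first exact: Hcol.
  have [Hright _] := kind_hinj (x i j) (y i j) (x (i + 1) j) (Hk _ _).
  have [_ Hleft] := kind_hinj (x (i + 1) j) (y (i + 1) j) (x i j) (Hk _ _).
  rewrite -Z.add_1_r; split=> E.
  - by apply: Hleft; [case: (Hx i j)|rewrite E; case: (Hy i j)].
  - by apply: Hright; [case: (Hx i j)|rewrite E; case: (Hy i j)].
Qed.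

(* Finite codes for subsets of Z: [None] is the empty set and [Some (a, n)]
   is the coset a + nZ (a singleton when n = 0, as z mod 0 = z). *)
Definition zcode := option (Z * nat).

Definition decode (c : zcode) (z : Z) : bool :=
  if c is Some (a, n) then (z - a) mod Z.of_nat n =? 0 else false.

Definition codeable (P : Z -> bool) : Prop := exists c, forall z, P z = decode c z.

(* All elements of [P] see the same translate of [P]; such a set is empty
   or a coset of its group of periods. *)
Definition homogeneous (P : Z -> bool) : Prop :=
  forall i i' t, P i -> P i' -> P (i + t) = P (i' + t).

Lemma Z_subgroup_cyclic (G : Z -> Prop) :
  G 0 -> (forall a b, G a -> G b -> G (a - b)) ->
  exists n : nat, forall z, G z <-> z mod Z.of_nat n = 0.
Proof.
  move=> G0 Gsub.
  have Gopp a : G a -> G (- a) by move=> Ga; have := Gsub 0 a G0 Ga.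
  have Gmul d q : G d -> G (q * d).
  { move=> Gd; move: q; apply: Z.bi_induction => [|q]; first by [].
    rewrite -Z.add_1_r Z.mul_add_distr_r Z.mul_1_l; split=> Gq.
    - by have := Gsub _ _ Gq (Gopp _ Gd); rewrite Z.sub_opp_r.
    - by have := Gsub _ _ Gq Gd; rewrite Z.add_simpl_r. }
  case: (classic (exists d, d <> 0 /\ G d)) => [[d [d0 Gd]]|Hnone]; last first.
  { exists 0%N => z; rewrite Zmod_0_r; split=> [Gz|->//].
    by apply: NNPP => z0; apply: Hnone; exists z. }
  pose Pos n := (0 < n)%coq_nat /\ G (Z.of_nat n).
  have [n [[[n_pos Gn] n_min] _]] : has_unique_least_element le Pos.
  { apply: dec_inh_nat_subset_has_unique_least_element => [m|].
    - exact: classic.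
    - exists (Z.to_nat (Z.abs d)); split; first lia.
      rewrite Z2Nat.id; last lia.
      by case: (Z.abs_spec d) => [[_ ->]|[_ ->]]; [|apply: Gopp]. }
  have n0 : Z.of_nat n <> 0 by lia.
  exists n => z; split=> [Gz|Hz].
  2: by rewrite ((Z.div_exact _ _ n0).2 Hz) Z.mul_comm; apply: Gmul.
  have Gr : G (z mod Z.of_nat n).
  { by rewrite Z.mod_eq // Z.mul_comm; apply: Gsub; last apply: Gmul. }
  have := Z.mod_pos_bound z (Z.of_nat n); apply: NNPP => Hr.
  have : (n <= Z.to_nat (z mod Z.of_nat n))%coq_nat.
  { apply: n_min; split; first lia.
    by rewrite Z2Nat.id; last lia. }
  lia.
Qed.

Lemma homogeneous_codeable P : homogeneous P -> codeable P.
Proof.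
  move=> HP; case: (classic (exists i0, P i0)) => [[i0 Pi0]|Hempty]; last first.
  { by exists None => z /=; apply/negP => Pz; apply: Hempty; exists z. }
  pose G d := forall z, P (z + d) = P z.
  have [n Hn] : exists n : nat, forall z, G z <-> z mod Z.of_nat n = 0.
  { apply: Z_subgroup_cyclic => [z|a b Ga Gb z]; first by rewrite Z.add_0_r.
    by rewrite -(Gb (z + (a - b))) -Z.add_assoc Z.sub_add Ga. }
  have HG z : P z <-> G (z - i0).
  { split=> [Pz w|Gz].
    - rewrite (_ : w + (z - i0) = z + (w - i0)); last ring.
      by rewrite (HP z i0) //; f_equal; ring.
    - by have := Gz i0; rewrite Z.add_comm Z.sub_add Pi0. }
  exists (Some (i0, n)) => z /=.
  by apply/Bool.eq_iff_eq_true; rewrite Z.eqb_eq -Hn; apply: HG.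
Qed.

Lemma homogeneous_of_sparse (P : Z -> bool) :
  (forall a b, a < b -> P a -> P b -> False) -> homogeneous P.
Proof.
  move=> Hsparse i i' t Pi Pi'.
  case: (Z.lt_total i i') => [lt|[<-//|gt]]; exfalso.
  - exact: (Hsparse i i').
  - exact: (Hsparse i' i).
Qed.

Lemma codeable_shift P s : codeable P -> codeable (fun z => P (z + s)).
Proof.
  move=> [[[a n]|] HP]; last by exists None => z; rewrite HP.
  exists (Some (a - s, n)) => z; rewrite HP /=.
  by rewrite Z.sub_sub_distr Z.add_sub_swap.
Qed.

Lemma hv_dline a : on_hline a -> on_vline a -> on_dline a. Proof. by case: a. Qed.
Lemma dline_hv a : on_dline a -> on_hline a = on_vline a. Proof. by case: a. Qed.
Lemma hline_dv a : on_hline a -> on_dline a = on_vline a. Proof. by case: a. Qed.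
Lemma vline_dh a : on_vline a -> on_dline a = on_hline a. Proof. by case: a. Qed.

Lemma hline_only a : on_hline a -> ~~ on_vline a -> a = sH. Proof. by case: a. Qed.
Lemma vline_only a : on_vline a -> ~~ on_hline a -> a = sV. Proof. by case: a. Qed.
Lemma dline_only a : on_dline a -> ~~ on_hline a -> ~~ on_vline a -> a = sD.
Proof. by case: a. Qed.

Lemma vok_to_B a b : a = sH \/ a = sB -> vok a b -> ~~ on_dline b -> b = sB.
Proof. by move=> [->|->]; case: b. Qed.
Lemma hok_to_A a b : a = sV \/ a = sA -> hok a b -> ~~ on_dline b -> b = sA.
Proof. by move=> [->|->]; case: b. Qed.
Lemma hok_to_B a b : a = sD \/ a = sB -> hok a b -> ~~ on_vline b -> b = sB.
Proof. by move=> [->|->]; case: b. Qed.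

Lemma Z_up_ind (P : Z -> Prop) a :
  P a -> (forall z, P z -> P (z + 1)) -> forall b, a <= b -> P b.
Proof. by move=> Pa HP; apply: Z.le_ind => // z _; rewrite -Z.add_1_r; apply: HP. Qed.

Section Shape.
Variable x : config sym.
Hypothesis Hx : valid x.

(* The diagonal through a crossing links rows to columns: the row set is a
   translate of the column set. *)
Lemma rows_cols_translate i j t : cols x i -> rows x j -> rows x (j + t) = cols x (i + t).
Proof.
  move=> Hi Hj; rewrite -(hline_row _ Hx (i + t)) -(vline_col _ Hx _ (j + t)).
  apply: dline_hv; rewrite dline_diag // (_ : i + t - (j + t) = i - j); last ring.
  by rewrite -dline_diag //; apply: hv_dline; rewrite ?hline_row ?vline_col.
Qed.

(* Along a horizontal (resp. vertical) line the diagonals meet the columns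
   (resp. rows): the diagonal set is their translate (resp. reflection). *)
Lemma diags_rows j0 c : rows x j0 -> diags x c = cols x (c + j0).
Proof.
  move=> Hj0; rewrite -(vline_col _ Hx _ j0) -hline_dv ?hline_row //.
  by rewrite dline_diag // Z.add_simpl_r.
Qed.

Lemma diags_cols i0 c : cols x i0 -> diags x c = rows x (i0 - c).
Proof.
  move=> Hi0; rewrite -(hline_row _ Hx i0) -vline_dh ?vline_col //.
  by rewrite dline_diag // Z.sub_sub_distr Z.sub_diag.
Qed.

(* Without vertical lines there is at most one horizontal line: above it,
   column 0 is filled with B. *)
Lemma rows_sparse : (forall i, ~~ cols x i) ->
  forall j0 j1, j0 < j1 -> rows x j0 -> rows x j1 -> False.
Proof.
  move=> Hnocols j0 j1 lt01 Hj0 Hj1.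
  have Hnodiag j : ~~ on_dline (x 0 j) by rewrite dline_diag // (diags_rows j0).
  have Habove : forall j, j0 + 1 <= j -> x 0 j = sB.
  { apply: Z_up_ind => [|j Hj].
    - apply: (vok_to_B (x 0 j0)); [left|by case: (Hx 0 j0)|exact: Hnodiag].
      by apply: hline_only; rewrite ?hline_row ?vline_col.
    - by apply: (vok_to_B (x 0 j)); [right|case: (Hx 0 j)|exact: Hnodiag]. }
  have Hj1B : x 0 j1 = sB by apply: Habove; lia.
  by move: Hj1; rewrite /rows Hj1B.
Qed.

(* Without horizontal lines there is at most one vertical line: to its
   right, row 0 is filled with A. *)
Lemma cols_sparse : (forall j, ~~ rows x j) ->
  forall i0 i1, i0 < i1 -> cols x i0 -> cols x i1 -> False.
Proof.
  move=> Hnorows i0 i1 lt01 Hi0 Hi1.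
  have Hnodiag i : ~~ on_dline (x i 0) by rewrite -/(diags x i) (diags_cols i0).
  have Hright : forall i, i0 + 1 <= i -> x i 0 = sA.
  { apply: Z_up_ind => [|i Hi].
    - apply: (hok_to_A (x i0 0)); [left|by case: (Hx i0 0)|exact: Hnodiag].
      by apply: vline_only; rewrite ?hline_row ?vline_col.
    - by apply: (hok_to_A (x i 0)); [right|case: (Hx i 0)|exact: Hnodiag]. }
  have Hi1A : x i1 0 = sA by apply: Hright; lia.
  by move: Hi1; rewrite /cols Hi1A.
Qed.

(* Without horizontal or vertical lines there is at most one diagonal: to
   its right, row 0 is filled with B. *)
Lemma diags_sparse : (forall j, ~~ rows x j) -> (forall i, ~~ cols x i) ->
  forall c0 c1, c0 < c1 -> diags x c0 -> diags x c1 -> False.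
Proof.
  move=> Hnorows Hnocols c0 c1 lt01 Hc0 Hc1.
  have Hright : forall i, c0 + 1 <= i -> x i 0 = sB.
  { apply: Z_up_ind => [|i Hi].
    - apply: (hok_to_B (x c0 0)); [left|by case: (Hx c0 0)|exact: Hnocols].
      by apply: dline_only; rewrite ?hline_row ?vline_col.
    - by apply: (hok_to_B (x i 0)); [right|case: (Hx i 0)|exact: Hnocols]. }
  have Hc1B : x c1 0 = sB by apply: Hright; lia.
  by move: Hc1; rewrite /diags Hc1B.
Qed.

Lemma cols_codeable : codeable (cols x).
Proof.
  apply: homogeneous_codeable.
  case: (classic (exists j0, rows x j0)) => [[j0 Hj0]|Hnorows].
  - by move=> i i' t Hi Hi'; rewrite -!(rows_cols_translate _ j0).
  - apply: homogeneous_of_sparse; apply: cols_sparse => j.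
    by apply/negP => Hj; apply: Hnorows; exists j.
Qed.

Lemma rows_codeable : codeable (rows x).
Proof.
  apply: homogeneous_codeable.
  case: (classic (exists i0, cols x i0)) => [[i0 Hi0]|Hnocols].
  - by move=> j j' t Hj Hj'; rewrite !(rows_cols_translate i0).
  - apply: homogeneous_of_sparse; apply: rows_sparse => i.
    by apply/negP => Hi; apply: Hnocols; exists i.
Qed.

Lemma diags_codeable : codeable (diags x).
Proof.
  case: (classic (exists j0, rows x j0)) => [[j0 Hj0]|Hnorows].
  { have [c Hc] := codeable_shift _ j0 cols_codeable.
    by exists c => z; rewrite (diags_rows j0). }
  have {}Hnorows j : ~~ rows x j by apply/negP => Hj; apply: Hnorows; exists j.
  apply/homogeneous_codeable/homogeneous_of_sparse.
  case: (classic (exists i0, cols x i0)) => [[i0 Hi0]|Hnocols].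
  - by move=> c0 c1 _; rewrite (diags_cols i0) // (negbTE (Hnorows _)).
  - apply: diags_sparse => // i.
    by apply/negP => Hi; apply: Hnocols; exists i.
Qed.

End Shape.

Definition signature := (zcode * zcode * zcode * sym)%type.

Definition has_signature (s : signature) (x : config sym) : Prop :=
  let: (cr, cc, cd, a) := s in
  [/\ forall j, rows x j = decode cr j, forall i, cols x i = decode cc i,
      forall c, diags x c = decode cd c & x 0 0 = a].

Definition enum_valid (n : nat) : config sym :=
  if @unpickle signature n is Some s
  then epsilon (inhabits (fun _ _ => sC)) (fun y => valid y /\ has_signature s y)
  else fun _ _ => sC.

(* X is countable: each valid configuration is the unique realisation of
   its signature. *)
Lemma countable_grid_SFT : countable_set (in_SFT grid_rules).
Proof.
  exists enum_valid => x /in_grid_SFT Hx.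
  have [cr Hr] := rows_codeable _ Hx; have [cc Hc] := cols_codeable _ Hx.
  have [cd Hd] := diags_codeable _ Hx.
  exists (pickle ((cr, cc, cd, x 0 0) : signature)); rewrite /enum_valid pickleK.
  have Hex : exists y, valid y /\ has_signature (cr, cc, cd, x 0 0) y.
  { by exists x; split; last split. }
  have [Hy [Hyr Hyc Hyd Hy00]] := epsilon_spec (inhabits (fun _ _ => sC)) _ Hex.
  by apply: (valid_rigid _ _ Hy Hx) => [j|i|c|]; rewrite ?Hr ?Hc ?Hd ?Hyr ?Hyc ?Hyd.
Qed.

Definition cell_sym (r s : Z) : sym :=
  if r =? 0 then (if s =? 0 then sC else sV)
  else if s =? 0 then sH
  else if r =? s then sD
  else if r <? s then sA else sB.

Definition grid (m : Z) : config sym := fun i j => cell_sym (i mod m) (j mod m).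

Lemma mod_succ m i : 0 < m ->
  (i + 1) mod m = if i mod m + 1 =? m then 0 else i mod m + 1.
Proof.
  move=> Hm; rewrite -Z.add_mod_idemp_l; last lia.
  have := Z.mod_pos_bound i m Hm.
  case: (Z.eqb_spec (i mod m + 1) m) => [->|Hne] Hr; first by rewrite Z.mod_same; lia.
  by apply: Z.mod_small; lia.
Qed.

Lemma grid_valid m : 0 < m -> valid (grid m).
Proof.
  move=> Hm i j; rewrite /grid !mod_succ //.
  have := Z.mod_pos_bound i m Hm; have := Z.mod_pos_bound j m Hm.
  move: (i mod m) (j mod m) => r s Hs Hr; rewrite /cell_sym.
  case: (Z.eqb_spec (r + 1) m) => ?; case: (Z.eqb_spec (s + 1) m) => ?;
  repeat match goal with
    | |- context [Z.eqb ?a ?b] => case: (Z.eqb_spec a b) => ?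
    | |- context [Z.ltb ?a ?b] => case: (Z.ltb_spec a b) => ?
    end; try (exfalso; lia); by split.
Qed.

Lemma grid_periodic m : 0 < m -> periodic (grid m).
Proof.
  move=> Hm; have Hshift k : (k + m) mod m = k mod m.
  { by rewrite -(Z.mod_add k 1 m) ?Z.mul_1_l; lia. }
  by exists m, m; split; [lia|split; [lia|]] => i j; rewrite /grid !Hshift.
Qed.

Definition cell_side (M : Z) : pattern sym :=
  ((0, 0), sC) :: ((M, 0), sC) ::
  List.map (fun k => ((Z.of_nat k, 0), sH)) (List.seq 1 (Z.to_nat (M - 1))).

Lemma cell_side_occurs M : 0 < M -> occurs (cell_side M) (grid M).
Proof.
  move=> HM; exists 0, 0 => e [<-|[<-|/in_map_iff [k [<- /List.in_seq Hk]]]] /=.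
  - by rewrite /grid Z.mod_0_l //; lia.
  - by rewrite /grid Z.add_0_r Z.mod_same ?Z.mod_0_l //; lia.
  - rewrite /grid Z.add_0_r Z.mod_0_l ?Z.mod_small; try lia.
    by rewrite /cell_sym; case: (Z.eqb_spec (Z.of_nat k) 0) => [?|_]; first lia.
Qed.

Lemma cell_sym_C r s : cell_sym r s = sC -> r = 0.
Proof.
  rewrite /cell_sym; case: (Z.eqb_spec r 0) => // _.
  by do 3 case: (_ =? _) => //; case: (_ <? _).
Qed.

Lemma cell_sym_H r s : cell_sym r s = sH -> r <> 0.
Proof. by rewrite /cell_sym; case: (Z.eqb_spec r 0) => // _; case: (_ =? _). Qed.

(* ... but in no grid of another mesh N: if N > M there is no crossing at
   offset M, and if N < M a crossing interrupts the segment at offset N. *)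
Lemma cell_side_not_occurs N M : 0 < N -> 0 < M -> N <> M ->
  ~ occurs (cell_side M) (grid N).
Proof.
  move=> HN HM HNM [v1 [v2 Hocc]].
  have /cell_sym_C Hv1 := Hocc _ (or_introl erefl).
  have /cell_sym_C HMv1 := Hocc _ (or_intror (or_introl erefl)).
  rewrite /= in Hv1 HMv1.
  have [ltMN|ltNM] : M < N \/ N < M by lia.
  - move: HMv1; rewrite Z.add_mod; last lia.
    rewrite Hv1 Z.add_0_r Z.mod_mod; last lia.
    by rewrite Z.mod_small; lia.
  - have HNin : List.In ((Z.of_nat (Z.to_nat N), 0), sH) (cell_side M).
    { by right; right; apply/in_map_iff; exists (Z.to_nat N); split; last (apply/in_seq; lia). }
    have /cell_sym_H := Hocc _ HNin; apply.
    rewrite /= Z2Nat.id; last lia.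
    rewrite Z.add_mod; last lia.
    by rewrite Z.mod_same ?Hv1 //; lia.
Qed.

Lemma config_eq_subpat {S : Type} (x y : config S) : config_eq x y -> subpat x y.
Proof.
  move=> Exy p [v1 [v2 Hocc]]; exists v1, v2 => e He.
  by rewrite Exy; apply: Hocc.
Qed.

Lemma grid_antichain N M : 0 < N -> 0 < M -> N <> M -> ~ subpat (grid N) (grid M).
Proof.
  move=> HN HM HNM Hsub.
  exact: (cell_side_not_occurs _ _ HN HM HNM (Hsub _ (cell_side_occurs _ HM))).
Qed.

Theorem mainTheorem9 :
  exists (S : finType) (F : list (pattern S)),
    countable_set (in_SFT F) /\
    (exists g : nat -> config S,
        (forall n, in_SFT F (g n) /\ periodic (g n)) /\
        (forall n m, n <> m -> ~ config_eq (g n) (g m))) /\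
    (exists h : nat -> config S,
        (forall n, in_SFT F (h n)) /\
        (forall n m, n <> m -> ~ subpat (h n) (h m))).
Proof.
  pose size_of (n : nat) := Z.of_nat n + 1.
  have size_pos n : 0 < size_of n by rewrite /size_of; lia.
  have size_inj n m : n <> m -> size_of n <> size_of m by rewrite /size_of; lia.
  have grid_in_X n : in_SFT grid_rules (grid (size_of n)).
  { exact/in_grid_SFT/grid_valid. }
  have antichain n m : n <> m -> ~ subpat (grid (size_of n)) (grid (size_of m)).
  { by move=> Hnm; apply: grid_antichain; auto. }
  exists sym, grid_rules; split; first exact: countable_grid_SFT.
  split; exists (fun n => grid (size_of n)); split => //.
  - by move=> n; split; last exact: grid_periodic.
  - by move=> n m Hnm /config_eq_subpat; apply: antichain.
Qed.
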